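(* Let $G$ be a finite nested group with chain of centers $G=X_0>X_1>\dots>X_n\ge1$, let $N$ be a normal subgroup of $G$, and let $1\le i\le n$. Then there exists $\chi\in\mathrm{Irr}(G/N)$ (viewed as a character of $G$) with $Z(\chi)=X_i$ if and only if $N[X_i,G]<N[X_{i-1},G]$.
   Context: For $\chi\in\mathrm{Irr}(G)$, $Z(\chi)=\{g\in G: |\chi(g)|=\chi(1)\}$. $G$ is nested if for all $\chi,\psi\in\mathrm{Irr}(G)$ either $Z(\chi)\le Z(\psi)$ or $Z(\psi)\le Z(\chi)$; then the distinct subgroups $Z(\chi)$, $\chi\in\mathrm{Irr}(G)$, form a chain $G=X_0>X_1>\dots>X_n\ge1$, the chain of centers. *)

From HB Require Import structures.
From mathcomp Require Import all_boot all_order all_algebra all_fingroup all_solvable all_field all_character.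
Set Implicit Arguments. Unset Strict Implicit. Unset Printing Implicit Defensive.
Import GroupScope.
Local Open Scope ring_scope.

(* Z(chi) = {g in G : |chi g| = chi 1}, i.e. MathComp's 'Z(chi)%CF for chi in Irr(G). *)
Definition nested (gT : finGroupType) (G : {group gT}) : Prop :=
  forall i j : Iirr G,
    ('Z('chi_i) \subset 'Z('chi_j))%CF \/ ('Z('chi_j) \subset 'Z('chi_i))%CF.

Definition center_chain (gT : finGroupType) (G : {group gT})
    (X : nat -> {set gT}) (n : nat) : Prop :=
  [/\ X 0 = G,
      (forall k, k < n -> X k.+1 \proper X k)%N,
      (forall i : Iirr G, exists2 k, (k <= n)%N & 'Z('chi_i)%CF = X k)
    & (forall k, k <= n -> exists i : Iirr G, 'Z('chi_i)%CF = X k)%N].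

From HB Require Import structures.
From mathcomp Require Import all_boot all_order all_algebra all_fingroup all_solvable all_field all_character.
Import GroupScope.
Local Open Scope ring_scope.

(* For chi in Irr(G) and A <= G, A lies in the center Z(chi)
   exactly when [A, G] lies in ker chi, because Z(chi)/ker chi is the center
   of G/ker chi.  Characters of G/N are the chi in Irr(G) with N <= ker chi,
   and a normal subgroup H of G is the intersection of the kernels of the
   irreducible characters containing it, so any subgroup not contained in H
   escapes one of those kernels.  Finally, since every Z(chi) is one of the
   X_k and the X_k strictly decrease, Z(chi) = X_i iff X_i <= Z(chi) but
   X_{i-1} is not contained in Z(chi).  Combining these facts:
   Z(chi) = X_i with N <= ker chi iff N[X_i, G] <= ker chi while
   [X_{i-1}, G] is not in ker chi, and such a chi exists iff
   [X_{i-1}, G] is not contained in the normal subgroup N[X_i, G]. *)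

Section IrrCenters.

Context {gT : finGroupType} {G : {group gT}}.

Lemma cfcenter_subE (k : Iirr G) (A : {set gT}) :
  A \subset G -> (A \subset 'Z('chi_k)%CF) = ([~: A, G] \subset cfker 'chi_k).
Proof.
move=> sAG; have nKG := normal_norm (cfker_normal 'chi_k).
have nKA : A \subset 'N(cfker 'chi_k) := subset_trans sAG nKG.
have sKZ := normal_sub (cfker_center_normal 'chi_k).
rewrite -quotient_cents2 // -(quotientSGK nKA sKZ).
by rewrite cfcenter_eq_center subsetI quotientS.
Qed.

Lemma irr_ker_separates (H : {group gT}) (B : {set gT}) :
  H <| G -> ~~ (B \subset H) ->
  exists2 k : Iirr G, H \subset cfker 'chi_k & ~~ (B \subset cfker 'chi_k).
Proof.
move=> nsHG notBH; apply/exists_inP; apply: contraNT notBH.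
rewrite negb_exists_in => /forall_inP B_ker.
rewrite -(cap_cfker_normal nsHG); apply/bigcapsP => k /B_ker.
by rewrite negbK.
Qed.

Lemma mod_irr_centerP (N : {group gT}) (Z : {set gT}) :
  N <| G ->
  (exists j : Iirr (G / N), 'Z(('chi_j %% N)%CF)%CF = Z) <->
  (exists2 k : Iirr G, N \subset cfker 'chi_k & 'Z('chi_k)%CF = Z).
Proof.
move=> nsNG; split=> [[j Zj] | [k kerNk Zk]].
  by exists (mod_Iirr j); rewrite mod_IirrE // ?cfker_mod.
by exists (quo_Iirr N k); rewrite -mod_IirrE // quo_IirrK.
Qed.

End IrrCenters.

Section CenterChain.

Context {gT : finGroupType} {G : {group gT}} {X : nat -> {set gT}} {n : nat}.
Hypothesis chainX : center_chain G X n.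

Lemma chain_sub {k} : (k <= n)%N -> X k \subset G.
Proof. by case: chainX => _ _ _ exZ /exZ[t <-]; apply: cfcenter_sub. Qed.

Lemma chain_mono k l : (k <= l <= n)%N -> X l \subset X k.
Proof.
case: chainX => _ ltX _ _; elim: l => [|l IHl]; first by rewrite leqn0 => /andP[/eqP->].
case/andP; rewrite leq_eqVlt => /orP[/eqP-> // | ltkl] ltln.
apply: subset_trans (proper_sub (ltX l ltln)) (IHl _).
by rewrite -ltnS ltkl ltnW.
Qed.

Lemma chain_centerP (k : Iirr G) i : (1 <= i <= n)%N ->
  ('Z('chi_k)%CF = X i) <->
  (X i \subset 'Z('chi_k)%CF /\ ~~ (X i.-1 \subset 'Z('chi_k)%CF)).
Proof.
case/andP=> i_gt0 le_in; case: (chainX) => _ ltX inX _.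
have ltXi : X i \proper X i.-1 by rewrite -{1}(prednK i_gt0) ltX ?prednK.
split=> [-> | [sXiZ notXi1Z]].
  by rewrite subxx; move: ltXi; rewrite properE => /andP[].
have [m le_mn Zk] := inX k; rewrite Zk in sXiZ notXi1Z *.
apply/eqP; rewrite eqEsubset sXiZ andbT.
have [le_im | lt_mi] := leqP i m; first by rewrite chain_mono ?le_im.
rewrite chain_mono ?(leq_trans (leq_pred i)) ?andbT // in notXi1Z.
by rewrite -ltnS prednK.
Qed.

End CenterChain.

Theorem lemma2p8 (gT : finGroupType) (G N : {group gT})
    (X : nat -> {set gT}) (n i : nat) :
  nested G -> center_chain G X n -> N <| G -> (1 <= i <= n)%N ->
  (exists j : Iirr (G / N), 'Z(('chi_j %% N)%CF)%CF = X i)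
  <-> ((N * [~: X i, G]) \proper (N * [~: X i.-1, G]))%g.
Proof.
move=> _ chainX nsNG i_range; have nNG := normal_norm nsNG.
have [i_gt0 le_in] := andP i_range.
have le_i1n : (i.-1 <= n)%N := leq_trans (leq_pred i) le_in.
have sXi := chain_sub chainX le_in; have sXi1 := chain_sub chainX le_i1n.
have sRiRi1 : [~: X i, G] \subset [~: X i.-1, G].
  by rewrite commgSS // (chain_mono chainX) ?leq_pred.
have nsRG : [~: X i, G] <| G.
  by rewrite /normal commg_normr andbT (subset_trans (commSg G sXi)) ?der1_subG.
pose H := (N <*> [~: X i, G])%G.
have defH : H :=: (N * [~: X i, G])%g.
  by rewrite /= norm_joinEr ?(subset_trans (normal_sub nsRG)).
have nsHG : H <| G by apply: normalY.
have centerE k := chain_centerP chainX k _ i_range.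
apply: (iff_trans (mod_irr_centerP _ (X i) nsNG)).
have sNH : N \subset H by rewrite defH mulG_subl.
have sRH : [~: X i, G] \subset H by rewrite defH mulG_subr.
rewrite properEneq mulgS // andbT -defH.
split=> [[k kerNk /centerE[]] | ltH].
  rewrite !cfcenter_subE // => kerRi notkerRi1.
  apply: contraNneq notkerRi1 => defH1; apply: subset_trans (mulG_subr N _) _.
  by rewrite -defH1 defH mul_subG.
have notRi1H : ~~ ([~: X i.-1, G] \subset H).
  apply: contraNN ltH => sRi1H; rewrite eqEsubset mul_subG // andbT.
  by rewrite defH mulgS.
have [k kerHk notkerRi1] := irr_ker_separates _ _ nsHG notRi1H.
exists k; first exact: subset_trans kerHk.
by apply/centerE; rewrite !cfcenter_subE //; split; first exact: subset_trans kerHk.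
Qed.
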